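(* Let $\mathcal{A}=\langle\Sigma,Q_\mathcal{A},q^0_\mathcal{A},\delta_\mathcal{A},\alpha_\mathcal{A}\rangle$ be a nice GFG-tNCW, let $\mathcal{S}$ be any frontier of $\mathcal{A}$, let $\mathcal{B}_\mathcal{S}$ be the automaton constructed from $\mathcal{A}$ and $\mathcal{S}$ (with any admissible choice of initial state), and let $\mathcal{C}$ be the quotient automaton constructed from $\mathcal{B}_\mathcal{S}$, as described in the context. Then $\mathcal{C}$ is $\alpha$-maximal up to homogeneity.
   Context: A tNCW is $\mathcal{A}=\langle\Sigma,Q,q_0,\delta,\alpha\rangle$: finite alphabet $\Sigma$, finite state set $Q$, initial state $q_0$, transition function $\delta:Q\times\Sigma\to 2^Q\setminus\{\emptyset\}$ with transition relation $\Delta=\{\langle q,\sigma,s\rangle:s\in\delta(q,\sigma)\}$, and $\alpha\subseteq\Delta$. $\alpha$-transitions are those in $\alpha$, $\bar\alpha$-transitions those in $\Delta\setminus\alpha$; $\delta^{\alpha}(q,\sigma)$, $\delta^{\bar\alpha}(q,\sigma)$ denote the $\sigma$-successors via $\alpha$-, resp. $\bar\alpha$-transitions. A run on $w=\sigma_1\sigma_2\cdots$ is $r_0r_1\cdots$ with $r_0=q_0$, $r_{i+1}\in\delta(r_i,\sigma_{i+1})$; accepting iff it traverses $\alpha$-transitions finitely often; $L(\mathcal{A})$ the accepted language. $\mathcal{A}^q$ is $\mathcal{A}$ with initial state $q$; $q\sim_\mathcal{A}s$ iff $L(\mathcal{A}^q)=L(\mathcal{A}^s)$. GFG: there is $f:\Sigma^*\to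 Q$ with $f(\epsilon)=q_0$, $\langle f(u),\sigma,f(u\sigma)\rangle\in\Delta$, and $f$'s run on every $w\in L(\mathcal{A})$ accepting; $q$ is GFG if $\mathcal{A}^q$ is. Semantically deterministic: all $\sigma$-successors of a state pairwise $\sim$; safe deterministic: $|\delta^{\bar\alpha}(q,\sigma)|\le 1$; normal: a $\bar\alpha$-path from $q$ to $s$ implies one from $s$ to $q$. Nice: all states reachable and GFG, normal, safe deterministic, semantically deterministic. Safe components: SCCs of the graph with edges $q\to q'$ iff $q'\in\delta^{\bar\alpha}(q,\sigma)$ for some $\sigma$; $\mathbb{S}(\mathcal{A})$ denotes their set. A run is safe if it uses no $\alpha$-transition; $L_{safe}(\mathcal{A}^q)$ is the set of words with a safe run from $q$. $q\approx_\mathcal{A}s$ iff $q\sim s$ and $L_{safe}(\mathcal{A}^q)=L_{safe}(\mathcal{A}^s)$; $q\precsim s$ iff $q\sim s$ and $L_{safe}(\mathcal{A}^q)\subseteq L_{safe}(\mathcal{A}^s)$. $\alpha$-homogenous: for all $q,\sigma$, $\delta^{\alpha}(q,\sigma)=\emptyset$ or $\delta^{\bar\alpha}(q,\sigma)=\emptyset$. An allowed transition of $\mathcal{A}$ is a triple $\langle q,\sigma,s\rangle\in Q\times\Sigma\times Q$ such that some $s'\sim s$ has $\langle q,\sigma,s'\rangle\in\Delta$. $\mathcal{A}$ is $\alpha$-maximal up to homogeneity if it is $\alpha$-homogenous and for every $q,\sigma$ with $\delta^{\bar\alpha}(q,\sigma)=\emptyset$ all allowed transitions in $\{q\}\times\{\sigma\}\times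 Q$ are in $\Delta$. Construction (Step 1): define $H\subseteq\mathbb{S}(\mathcal{A})^2$ by $H(S,S')$ iff there are $q\in S$, $q'\in S'$ with $q\precsim q'$. A set $\mathcal{S}\subseteq\mathbb{S}(\mathcal{A})$ is a frontier if for every $S\in\mathbb{S}(\mathcal{A})$ there is $S'\in\mathcal{S}$ with $H(S,S')$, and for distinct $S,S'\in\mathcal{S}$, neither $H(S,S')$ nor $H(S',S)$. Given a frontier $\mathcal{S}$, $\mathcal{B}_\mathcal{S}=\langle\Sigma,Q_\mathcal{S},q^0_\mathcal{S},\delta_\mathcal{S},\alpha_\mathcal{S}\rangle$ where $Q_\mathcal{S}$ is the union of the components in $\mathcal{S}$; $q^0_\mathcal{S}=q^0_\mathcal{A}$ if $q^0_\mathcal{A}\in Q_\mathcal{S}$, and otherwise $q^0_\mathcal{S}$ is some $q'\in Q_\mathcal{S}$ with $q^0_\mathcal{A}\precsim q'$; for $q\in Q_\mathcal{S}$ and $\sigma\in\Sigma$: if $\delta^{\bar\alpha}_\mathcal{A}(q,\sigma)\ne\emptyset$ then $\delta^{\bar\alpha}_\mathcal{S}(q,\sigma)=\delta^{\bar\alpha}_\mathcal{A}(q,\sigma)$ and $\delta^{\alpha}_\mathcal{S}(q,\sigma)=\emptyset$; otherwise $\delta^{\bar\alpha}_\mathcal{S}(q,\sigma)=\emptyset$ and $\delta^{\alpha}_\mathcal{S}(q,\sigma)=\{q'\in Q_\mathcal{S}:\exists q''\in\delta^\alpha_\mathcal{A}(q,\sigma),\ q'\sim_\mathcal{A}q''\}$.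 (Step 2): for $\mathcal{B}=\mathcal{B}_\mathcal{S}$ with states $Q$, initial state $q_0$, let $[q]=\{q':q\approx_\mathcal{B}q'\}$ and $\mathcal{C}=\langle\Sigma,\{[q]:q\in Q\},[q_0],\delta_\mathcal{C},\alpha_\mathcal{C}\rangle$, where $\langle[q],\sigma,[p]\rangle\in\Delta_\mathcal{C}$ iff there are $q'\in[q]$, $p'\in[p]$ with $\langle q',\sigma,p'\rangle\in\Delta_\mathcal{B}$, and such a transition is in $\alpha_\mathcal{C}$ iff $\langle q',\sigma,p'\rangle\in\alpha_\mathcal{B}$ (this is independent of the choice of $q',p'$). *)

From mathcomp Require Import all_boot.
From Stdlib Require Import Relations.
Set Implicit Arguments.
Unset Strict Implicit.
Unset Printing Implicit Defensive.

(* A (transition-based) automaton over alphabet Sigma with state type Q.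
   [tr q a s] : <q,a,s> is in Delta;  [acc q a s] : <q,a,s> is in alpha. *)
Record tNCW (Sigma Q : Type) := TNCW {
  init : Q;
  tr : Q -> Sigma -> Q -> Prop;
  acc : Q -> Sigma -> Q -> Prop }.

Section Generic.
Variables (Sigma Q : Type) (A : tNCW Sigma Q).

Definition wf_tNCW : Prop :=
  (forall q a, exists s, tr A q a s) /\
  (forall q a s, acc A q a s -> tr A q a s).

Definition alpha_tr q a s := tr A q a s /\ acc A q a s.
Definition safe_tr q a s := tr A q a s /\ ~ acc A q a s.

(* infinite words w = w 0, w 1, ...  (w i is the letter sigma_{i+1}) *)
Definition word := nat -> Sigma.

Definition run_from (q : Q) (w : word) (r : nat -> Q) : Prop :=
  r 0 = q /\ forall i, tr A (r i) (w i) (r i.+1).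

Definition accepting (w : word) (r : nat -> Q) : Prop :=
  exists N, forall i, N <= i -> ~ acc A (r i) (w i) (r i.+1).

Definition lang (q : Q) (w : word) : Prop :=
  exists r, run_from q w r /\ accepting w r.

Definition safe_lang (q : Q) (w : word) : Prop :=
  exists r, run_from q w r /\ forall i, ~ acc A (r i) (w i) (r i.+1).

Definition lang_equiv (q s : Q) : Prop := forall w, lang q w <-> lang s w.

Definition approx (q s : Q) : Prop :=
  lang_equiv q s /\ forall w, safe_lang q w <-> safe_lang s w.

Definition precsim (q s : Q) : Prop :=
  lang_equiv q s /\ forall w, safe_lang q w -> safe_lang s w.

Definition GFG_from (q : Q) : Prop :=
  exists f : seq Sigma -> Q,
    f [::] = q /\
    (forall u a, tr A (f u) a (f (rcons u a))) /\
    (forall w : word, lang q w -> accepting w (fun i => f (mkseq w i))).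

Definition GFG : Prop := GFG_from (init A).

Definition semantically_det : Prop :=
  forall q a s s', tr A q a s -> tr A q a s' -> lang_equiv s s'.

Definition safe_det : Prop :=
  forall q a s s', safe_tr q a s -> safe_tr q a s' -> s = s'.

Definition safe_edge (q q' : Q) : Prop := exists a, safe_tr q a q'.
Definition safe_reach : Q -> Q -> Prop := clos_refl_trans Q safe_edge.

Definition normal : Prop :=
  forall q s, safe_reach q s -> safe_reach s q.

Definition any_edge (q q' : Q) : Prop := exists a, tr A q a q'.

Definition all_reachable : Prop :=
  forall q, clos_refl_trans Q any_edge (init A) q.

Definition nice : Prop :=
  all_reachable /\ (forall q, GFG_from q) /\ normal /\ safe_det /\
  semantically_det.

Definition alpha_homogenous : Prop :=
  forall q a, (~ exists s, alpha_tr q a s) \/ (~ exists s, safe_tr q a s).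

Definition allowed (q : Q) (a : Sigma) (s : Q) : Prop :=
  exists s', lang_equiv s' s /\ tr A q a s'.

Definition alpha_maximal_up_to_homogeneity : Prop :=
  alpha_homogenous /\
  forall q a, (~ exists s, safe_tr q a s) ->
    forall s, allowed q a s -> tr A q a s.

End Generic.

Section Step1.
Variables (Sigma Q : finType) (A : tNCW Sigma Q).

Definition safe_component (S : {set Q}) : Prop :=
  exists q, forall q', q' \in S <-> (safe_reach A q q' /\ safe_reach A q' q).

Definition Hrel (S S' : {set Q}) : Prop :=
  exists q q', q \in S /\ q' \in S' /\ precsim A q q'.

Definition frontier (FS : {set {set Q}}) : Prop :=
  (forall S, S \in FS -> safe_component S) /\
  (forall S, safe_component S -> exists2 S', S' \in FS & Hrel S S') /\
  (forall S S', S \in FS -> S' \in FS -> S != S' -> ~ Hrel S S' /\ ~ Hrel S' S).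

End Step1.

Definition QS (Q : finType) (FS : {set {set Q}}) : {set Q} := \bigcup_(S in FS) S.

Definition QB (Q : finType) (FS : {set {set Q}}) : Type := {q : Q | q \in QS FS}.

Section Bconstr.
Variables (Sigma Q : finType) (A : tNCW Sigma Q) (FS : {set {set Q}}).

Definition admissible_init (q0 : QB FS) : Prop :=
  (init A \in QS FS -> val q0 = init A) /\
  (init A \notin QS FS -> precsim A (init A) (val q0)).

Definition has_safe (q : Q) (a : Sigma) : Prop := exists s, safe_tr A q a s.

Definition trB (q : QB FS) (a : Sigma) (q' : QB FS) : Prop :=
  (has_safe (val q) a /\ safe_tr A (val q) a (val q')) \/
  (~ has_safe (val q) a /\
   exists q'', alpha_tr A (val q) a q'' /\ lang_equiv A (val q') q'').

Definition accB (q : QB FS) (a : Sigma) (q' : QB FS) : Prop :=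
  ~ has_safe (val q) a /\
  exists q'', alpha_tr A (val q) a q'' /\ lang_equiv A (val q') q''.

Definition B_aut (q0 : QB FS) : tNCW Sigma (QB FS) := TNCW q0 trB accB.

End Bconstr.

Section Quotient.
Variables (Sigma P : Type) (B : tNCW Sigma P).

Definition cls (q : P) : P -> Prop := fun q' => approx B q q'.

Definition QC : Type := {X : P -> Prop | exists q, X = cls q}.

Definition trC (X : QC) (a : Sigma) (Y : QC) : Prop :=
  exists q' p', sval X q' /\ sval Y p' /\ tr B q' a p'.

Definition accC (X : QC) (a : Sigma) (Y : QC) : Prop :=
  exists q' p', sval X q' /\ sval Y p' /\ tr B q' a p' /\ acc B q' a p'.

Definition cls_state (q : P) : QC := exist _ (cls q) (ex_intro _ q erefl).

Definition C_aut : tNCW Sigma QC := TNCW (cls_state (init B)) trC accC.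

End Quotient.

Arguments admissible_init {Sigma Q} A FS q0.
Arguments B_aut {Sigma Q} A FS q0.

From mathcomp Require Import all_boot.
From mathcomp Require Import boolp.
From Stdlib Require Import Relations.
Set Implicit Arguments.
Unset Strict Implicit.
Unset Printing Implicit Defensive.

(* Write ≈ for ≈_B.  If B = B_S is α-homogeneous and safe deterministic, and
   every safe transition of B leads to a state with a nonempty safe language,
   then ≈-equivalent states have ≈-equivalent safe successors.  Hence each state
   of the quotient C accepts exactly the language of each of its members, and
   C inherits α-maximality up to homogeneity from B.
   These three properties of B follow from its definition and the normality of
   A.  B is α-maximal because B^q accepts exactly L(A^q).  A run of B is
   eventually a safe run of A.  Conversely, B can shadow the run on w chosen by
   a GFG strategy for A^q: it takes the safe transition when there is one and
   otherwise jumps to a frontier state that ≼-dominates the target.  Once the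
   GFG run has become safe, the next jump (if any) lands on a state whose safe
   language contains the rest of w, so the shadow run becomes safe too. *)

Lemma dependent_choice (T : Type) (Inv : nat -> T -> Prop) (Step : nat -> T -> T -> Prop) x :
  Inv 0 x -> (forall i y, Inv i y -> exists z, Step i y z /\ Inv i.+1 z) ->
  exists r : nat -> T, r 0 = x /\ forall i, Inv i (r i) /\ Step i (r i) (r i.+1).
Proof.
move=> Inv0 step.
pose next i (y : {y | Inv i y}) := cid (step i _ (svalP y)).
pose fix r i : {y | Inv i y} :=
  if i is i'.+1 then exist _ (sval (next i' (r i'))) (svalP (next i' (r i'))).2
  else exist _ x Inv0.
exists (fun i => sval (r i)); split=> // i; split; first exact: svalP.
exact: (svalP (next i (r i))).1.
Qed.

Definition wcons (T : Type) (a : T) (v : nat -> T) : nat -> T :=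
  fun n => if n is n'.+1 then v n' else a.

Definition wdrop (T : Type) (i : nat) (w : nat -> T) : nat -> T := fun n => w (i + n).

Lemma wdrop0 (T : Type) (w : nat -> T) : wdrop 0 w = w.
Proof. exact: funext. Qed.

Lemma wdropS (T : Type) i (w : nat -> T) : wdrop i w = wcons (w i) (wdrop i.+1 w).
Proof. by apply: funext => -[|n]; rewrite /wdrop /= ?addn0 ?addSnnS. Qed.

Section Languages.
Variables (Sigma P : Type) (M : tNCW Sigma P).

Lemma lang_cons x a y v : tr M x a y -> lang M y v -> lang M x (wcons a v).
Proof.
move=> hxy [r [[r0 hr] [N hN]]].
exists (fun n => if n is n'.+1 then r n' else x); split.
  by split=> // -[|i] //=; rewrite r0.
by exists N.+1 => -[|i] // /hN.
Qed.

Lemma lang_uncons x a v : lang M x (wcons a v) -> exists2 y, tr M x a y & lang M y v.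
Proof.
move=> [r [[r0 hr] [N hN]]]; exists (r 1); first by rewrite -r0; exact: hr 0.
exists (fun n => r n.+1); split; first by split=> // i; exact: hr.
by exists N => i hi; apply: hN; exact: leqW.
Qed.

Lemma safe_lang_cons x a y v : safe_tr M x a y -> safe_lang M y v -> safe_lang M x (wcons a v).
Proof.
move=> [hxy hna] [r [[r0 hr] hs]].
exists (fun n => if n is n'.+1 then r n' else x); split.
  by split=> // -[|i] //=; rewrite r0.
by case=> [|i] //=; rewrite r0.
Qed.

Lemma safe_lang_uncons x a v :
  safe_lang M x (wcons a v) -> exists2 y, safe_tr M x a y & safe_lang M y v.
Proof.
move=> [r [[r0 hr] hs]]; exists (r 1); first by rewrite -r0; split; [exact: hr 0 | exact: hs 0].
exists (fun n => r n.+1); split=> [|i]; last exact: hs.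
by split=> // i; exact: hr.
Qed.

Lemma safe_lang_lang x v : safe_lang M x v -> lang M x v.
Proof. by move=> [r [hr hs]]; exists r; split=> //; exists 0. Qed.

Lemma run_safe_lang_drop r w N i :
  (forall n, tr M (r n) (w n) (r n.+1)) ->
  (forall n, N <= n -> ~ acc M (r n) (w n) (r n.+1)) ->
  N <= i -> safe_lang M (r i) (wdrop i w).
Proof.
move=> hr hN hi; exists (fun n => r (i + n)); split.
  by split=> [|n]; rewrite ?addn0 // addnS; exact: hr.
by move=> n; rewrite addnS; apply: hN; exact: leq_trans hi (leq_addr _ _).
Qed.

Lemma lang_of_suffix (s : nat -> P) w N :
  (forall j v, lang M (s j.+1) v -> lang M (s j) (wcons (w j) v)) ->
  lang M (s N) (wdrop N w) -> lang M (s 0) w.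
Proof.
move=> back hN; rewrite -(wdrop0 w).
suff: forall k j, k + j = N -> lang M (s j) (wdrop j w) by apply; rewrite addn0.
elim=> [|k IH] j; first by rewrite add0n => ->.
by move=> hkj; rewrite wdropS; apply: back; apply: IH; rewrite -addSnnS.
Qed.

Lemma approx_refl x : approx M x x.
Proof. by []. Qed.

Lemma approx_sym x y : approx M x y -> approx M y x.
Proof. by move=> [hl hs]; split=> v; [rewrite hl | rewrite hs]. Qed.

Lemma approx_trans x y z : approx M x y -> approx M y z -> approx M x z.
Proof. by move=> [hl hs] [hl' hs']; split=> v; [rewrite hl hl' | rewrite hs hs']. Qed.

End Languages.

Section QuotientAutomaton.
Variables (Sigma P : Type) (B : tNCW Sigma P).
Hypotheses (homB : alpha_homogenous B) (sdetB : safe_det B).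
Hypothesis liveB : forall q a s, safe_tr B q a s -> exists v, safe_lang B s v.

Lemma safe_tr_unique x a y z : safe_tr B x a y -> tr B x a z -> z = y.
Proof.
move=> hy hz; apply: (sdetB _ hy); split=> // hacc.
by case: (homB x a) => h; apply: h; [exists z | exists y].
Qed.

Lemma lang_succ_sub x x' a y y' :
  (forall v, lang B x v -> lang B x' v) -> tr B x a y -> safe_tr B x' a y' ->
  forall u, lang B y u -> lang B y' u.
Proof.
move=> sub hy hy' u hu; have [z hz hzu] := lang_uncons (sub _ (lang_cons hy hu)).
by rewrite -(safe_tr_unique hy' hz).
Qed.

Lemma safe_lang_succ_sub x x' a y y' :
  (forall v, safe_lang B x v -> safe_lang B x' v) -> safe_tr B x a y -> safe_tr B x' a y' ->
  forall u, safe_lang B y u -> safe_lang B y' u.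
Proof.
move=> sub hy hy' u hu; have [z hz hzu] := safe_lang_uncons (sub _ (safe_lang_cons hy hu)).
by rewrite (sdetB hy' hz).
Qed.

Lemma approx_safe_succ x x' a y y' :
  approx B x x' -> safe_tr B x a y -> safe_tr B x' a y' -> approx B y y'.
Proof.
move=> [hl hs] hy hy'; split=> u; split.
- by apply: lang_succ_sub hy.1 hy' u => v /hl.
- by apply: lang_succ_sub hy'.1 hy u => v /hl.
- by apply: safe_lang_succ_sub hy hy' u => v /hs.
- by apply: safe_lang_succ_sub hy' hy u => v /hs.
Qed.

Lemma approx_safe_tr x x' a y :
  approx B x x' -> safe_tr B x a y -> exists2 y', safe_tr B x' a y' & approx B y y'.
Proof.
move=> hx hy; have [v hv] := liveB hy.
have [y' hy' _] := safe_lang_uncons ((hx.2 _).1 (safe_lang_cons hy hv)).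
by exists y'; last exact: approx_safe_succ hx hy hy'.
Qed.

Lemma approx_safe_no_alpha x x' a y z :
  approx B x x' -> safe_tr B x a y -> ~ alpha_tr B x' a z.
Proof.
move=> hx hy hz; have [y' hy' _] := approx_safe_tr hx hy.
by case: (homB x' a) => h; apply: h; [exists z | exists y'].
Qed.

Lemma cls_approx (X : QC B) x y : sval X x -> sval X y -> approx B x y.
Proof.
by case: X => F [q eF] /=; rewrite eF => hx hy; exact: approx_trans (approx_sym hx) hy.
Qed.

Lemma cls_closed (X : QC B) x y : sval X x -> approx B x y -> sval X y.
Proof. by case: X => F [q eF] /=; rewrite eF => hx hy; exact: approx_trans hx hy. Qed.

Definition cls_repr (X : QC B) : P := sval (cid (svalP X)).

Lemma cls_reprP (X : QC B) : sval X (cls_repr X).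
Proof. by rewrite /cls_repr; case: cid => q /= ->; exact: approx_refl. Qed.

Lemma C_safe_tr_lift (X Y : QC B) a x :
  safe_tr (C_aut B) X a Y -> sval X x -> exists2 y, safe_tr B x a y & sval Y y.
Proof.
move=> [[x1 [y1 [hx1 [hy1 ht]]]] hnacc] hx.
have hsafe : safe_tr B x1 a y1.
  by split=> // hacc; apply: hnacc; exists x1, y1.
have [y hy hyy] := approx_safe_tr (cls_approx hx1 hx) hsafe.
by exists y; last exact: cls_closed hy1 hyy.
Qed.

Lemma C_safe_lang (X : QC B) x w : sval X x -> safe_lang (C_aut B) X w -> safe_lang B x w.
Proof.
move=> hx [R [[R0 hR] hsafe]].
have step i y : sval (R i) y -> exists z, safe_tr B y (w i) z /\ sval (R i.+1) z.
  by move=> /(C_safe_tr_lift (conj (hR i) (hsafe i))) [z hz hzR]; exists z.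
have hx0 : sval (R 0) x by rewrite R0.
have [r [r0 hr]] := dependent_choice hx0 step.
by exists r; split; [split=> // i | move=> i]; case: (hr i) => _ [].
Qed.

Lemma C_lang_sub (X : QC B) x w : sval X x -> lang (C_aut B) X w -> lang B x w.
Proof.
move=> hx [R [[R0 hR] [N hN]]].
pose s i := cls_repr (R i).
have back j v : lang B (s j.+1) v -> lang B (s j) (wcons (w j) v).
  have [x1 [y1 [hx1 [hy1 ht]]]] := hR j.
  move=> /(cls_approx (cls_reprP _) hy1).1 hv.
  by apply/(cls_approx (cls_reprP _) hx1).1; exact: lang_cons ht hv.
have hsN := C_safe_lang (cls_reprP (R N)) (run_safe_lang_drop hR hN (leqnn N)).
have hx0 : sval (R 0) x by rewrite R0.
apply/((cls_approx (cls_reprP _) hx0).1 w).1/(lang_of_suffix back).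
exact: safe_lang_lang hsN.
Qed.

Lemma C_lang_sup (X : QC B) x w : sval X x -> lang B x w -> lang (C_aut B) X w.
Proof.
move=> hx [r [[r0 hr] [N hN]]].
pose R i := if i is i'.+1 then cls_state B (r i) else X.
have memR i : sval (R i) (r i) by case: i => [|i] /=; [rewrite r0 | exact: approx_refl].
exists R; split; first by split=> // i; exists (r i), (r i.+1).
exists N => i hi [x1 [y1 [hx1 [_ [ht hacc]]]]].
exact: approx_safe_no_alpha (cls_approx (memR i) hx1) (conj (hr i) (hN i hi)) (conj ht hacc).
Qed.

Lemma C_lang (X : QC B) x w : sval X x -> lang (C_aut B) X w <-> lang B x w.
Proof. by move=> hx; split; [exact: C_lang_sub | exact: C_lang_sup]. Qed.

Theorem C_alpha_maximal :
  alpha_maximal_up_to_homogeneity B -> alpha_maximal_up_to_homogeneity (C_aut B).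
Proof.
case=> _ maxB; split.
  move=> X a; have [[Y1 [_ [x [y [hx [_ [ht hacc]]]]]]]|] :=
    pselect (exists Y, alpha_tr (C_aut B) X a Y); last by left.
  right=> -[Y2 /C_safe_tr_lift /(_ hx) [z hz _]].
  by case: (homB x a) => h; apply: h; [exists y | exists z].
move=> X a noSafe Y [Y' [eqY' [x1 [y1 [hx1 [hy1 ht]]]]]].
have noSafe1 : ~ exists y, safe_tr B x1 a y.
  move=> [y hy]; apply: noSafe; exists (cls_state B y); split.
    by exists x1, y; split; last split; [|exact: approx_refl|exact: hy.1].
  move=> [x [z [hx [_ [hz hacc]]]]].
  exact: approx_safe_no_alpha (cls_approx hx1 hx) hy (conj hz hacc).
exists x1, (cls_repr Y); split=> //; split; first exact: cls_reprP.
apply: maxB noSafe1 _ _; exists y1; split=> // v.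
by rewrite -(C_lang v hy1) -(C_lang v (cls_reprP Y)).
Qed.

End QuotientAutomaton.

Section SafeSimulation.
Variables (Sigma Q : Type) (A : tNCW Sigma Q).
Hypotheses (semdetA : semantically_det A) (normalA : normal A) (sdetA : safe_det A).

Lemma lang_equiv_succ x x' a y y' :
  lang_equiv A x x' -> tr A x a y -> tr A x' a y' -> lang_equiv A y y'.
Proof.
have sub x1 x1' y1 y1' : lang_equiv A x1 x1' -> tr A x1 a y1 -> tr A x1' a y1' ->
    forall v, lang A y1 v -> lang A y1' v.
  move=> he hy hy' v hv.
  have [z hz hzv] := lang_uncons ((he _).1 (lang_cons hy hv)).
  exact/(semdetA hz hy').
move=> he hy hy' v; split; first exact: sub he hy hy' v.
by apply: sub hy' hy v => u; rewrite he.
Qed.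

Lemma safe_tr_live x a y : safe_tr A x a y -> exists v, safe_lang A y v.
Proof.
move=> hxy; have hyx : safe_reach A y x by apply: normalA; apply: rt_step; exists a.
(* Walk safely towards x; on reaching x, take the safe edge to y and start over. *)
have step (i : nat) u : safe_reach A u x -> exists z, safe_edge A u z /\ safe_reach A z x.
  move=> /clos_rt_rt1n_iff hux; destruct hux as [|z ? huz hzx].
    by exists y; split=> //; exists a.
  by exists z; split=> //; exact: clos_rt1n_rt.
have [r [r0 hr]] := dependent_choice hyx step.
have [w hw] := choice (fun i => (hr i).2).
by exists w, r; split; [split=> // i | move=> i]; case: (hw i).
Qed.

Lemma precsim_safe_succ x x' a y :
  precsim A x x' -> safe_tr A x a y -> exists2 y', safe_tr A x' a y' & precsim A y y'.
Proof.
move=> [hl hs] hy; have [v hv] := safe_tr_live hy.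
have [y' hy' _] := safe_lang_uncons (hs _ (safe_lang_cons hy hv)).
exists y' => //; split; first exact: lang_equiv_succ hl hy.1 hy'.1.
move=> u hu; have [y'' hy'' hu''] := safe_lang_uncons (hs _ (safe_lang_cons hy hu)).
by rewrite (sdetA hy' hy'').
Qed.

Lemma precsim_safe_reach x x' s :
  precsim A x x' -> safe_reach A x s -> exists2 s', precsim A s s' & safe_reach A x' s'.
Proof.
move=> hp /clos_rt_rt1n_iff hs; elim: hs x' hp => [x0|x0 z s0 [a ha] _ IH] x' hp.
  by exists x' => //; exact: rt_refl.
have [z' hz' hpz] := precsim_safe_succ hp ha.
have [s' hs' hr] := IH _ hpz; exists s' => //.
by apply: rt_trans hr; apply: rt_step; exists a.
Qed.

End SafeSimulation.

Section Frontier.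
Variables (Sigma Q : finType) (A : tNCW Sigma Q) (FS : {set {set Q}}).
Hypotheses (semdetA : semantically_det A) (normalA : normal A) (sdetA : safe_det A).
Hypothesis frA : frontier A FS.

Lemma safe_component_closed S x y :
  safe_component A S -> x \in S -> safe_reach A x y -> y \in S.
Proof.
move=> [r hr] /hr [hrx hxr] hxy; apply/hr; split; first exact: rt_trans hrx hxy.
by apply: rt_trans _ hxr; exact: normalA.
Qed.

Lemma QS_closed x y : x \in QS FS -> safe_reach A x y -> y \in QS FS.
Proof.
move=> /bigcupP [S hS hx] hxy; apply/bigcupP; exists S => //.
exact: safe_component_closed (frA.1 _ hS) hx hxy.
Qed.

Lemma frontier_dominates s : exists g : QB FS, precsim A s (val g).
Proof.
pose Ss := [set z | `[< safe_reach A s z /\ safe_reach A z s >]].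
have hSs : safe_component A Ss by exists s => z; rewrite inE; split=> /asboolP.
have [S' hS' [x [x' [hx [hx' hp]]]]] := frA.2.1 _ hSs.
move: hx; rewrite inE => /asboolP [_ hxs].
have [s' hs' hr] := precsim_safe_reach semdetA normalA sdetA hp hxs.
have hin : s' \in QS FS.
  by apply/bigcupP; exists S' => //; exact: safe_component_closed (frA.1 _ hS') hx' hr.
by exists (exist _ s' hin).
Qed.

End Frontier.

Section FrontierAutomaton.
Variables (Sigma Q : finType) (A : tNCW Sigma Q) (FS : {set {set Q}}) (q0 : QB FS).
Hypotheses (semdetA : semantically_det A) (normalA : normal A) (sdetA : safe_det A).
Hypotheses (frA : frontier A FS) (succA : forall q a, exists s, tr A q a s).
Hypothesis gfgA : forall q, GFG_from A q.
Notation B := (B_aut A FS q0).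

Lemma trB_safe (x y : QB FS) a :
  trB A x a y -> has_safe A (val x) a -> safe_tr A (val x) a (val y).
Proof. by case=> [[_ h] | [hns _]]. Qed.

Lemma B_safe_trE q a s : safe_tr B q a s <-> safe_tr A (val q) a (val s).
Proof.
split=> [[ht hnacc] | h].
  by case: ht => [[_ h] | h] //; case: hnacc.
by split; [left; split=> //; exists (val s) | case=> hns _; apply: hns; exists (val s)].
Qed.

Lemma B_has_safe q a : has_safe A (val q) a -> exists s, safe_tr B q a s.
Proof.
move=> [y hy]; have hin : y \in QS FS.
  by apply: (QS_closed normalA frA (valP q)); apply: rt_step; exists a.
by exists (exist _ y hin); apply/B_safe_trE.
Qed.

Lemma B_safe_lang q w : safe_lang B q w <-> safe_lang A (val q) w.
Proof.
split=> [[r [[r0 hr] hs]] | [r [[r0 hr] hs]]].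
  have hA i : safe_tr A (val (r i)) (w i) (val (r i.+1)) by apply/B_safe_trE; split.
  exists (fun i => val (r i)); split; last by move=> i; exact: (hA i).2.
  by split=> [|i]; [rewrite r0 | exact: (hA i).1].
have hin i : r i \in QS FS.
  elim: i => [|i IH]; first by rewrite r0; exact: valP.
  by apply: (QS_closed normalA frA IH); apply: rt_step; exists (w i).
pose rB i : QB FS := exist _ (r i) (hin i).
have hB i : safe_tr B (rB i) (w i) (rB i.+1) by apply/B_safe_trE; split; [exact: hr | exact: hs].
exists rB; split; last by move=> i; exact: (hB i).2.
by split=> [|i]; [apply: val_inj; rewrite /= r0 | exact: (hB i).1].
Qed.

Lemma trB_lang_cons (x y : QB FS) a v :
  trB A x a y -> lang A (val y) v -> lang A (val x) (wcons a v).
Proof.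
case=> [[_ [ht _]] | [_ [q'' [[ht _] he]]]] hv; first exact: lang_cons ht hv.
by apply: lang_cons ht _; apply/he.
Qed.

Lemma B_lang_sub q w : lang B q w -> lang A (val q) w.
Proof.
move=> [b [[b0 hb] [N hN]]]; rewrite -b0.
apply: (@lang_of_suffix _ _ _ (fun j => val (b j)) w N) => [j v | ].
  exact: trB_lang_cons (hb j).
by apply/safe_lang_lang/B_safe_lang; exact: run_safe_lang_drop hb hN (leqnn N).
Qed.

Lemma B_shadow_step (b : QB FS) a t t' : lang_equiv A (val b) t -> tr A t a t' ->
  exists b', [/\ trB A b a b', lang_equiv A (val b') t' &
                 ~ has_safe A (val b) a -> precsim A t' (val b')].
Proof.
move=> hbt ht; have [hs | hns] := pselect (has_safe A (val b) a).
  have [b' /B_safe_trE hb'] := B_has_safe hs.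
  exists b'; split=> //; first by left.
  exact: (lang_equiv_succ semdetA hbt hb'.1 ht).
have [g hg] := frontier_dominates semdetA normalA sdetA frA t'.
have [s hs] := succA (val b) a.
have hs_alpha : alpha_tr A (val b) a s.
  by split=> //; apply: contrapT => hnacc; apply: hns; exists s.
have hgs : lang_equiv A (val g) s.
  move=> v; rewrite -(hg.1 v).
  exact: (lang_equiv_succ semdetA (fun u => iff_sym (hbt u)) ht hs v).
exists g; split=> //; first by right; split=> //; exists s.
by move=> v; rewrite (hg.1 v).
Qed.

Lemma B_run_safe_from (b : nat -> QB FS) w j :
  (forall i, trB A (b i) (w i) (b i.+1)) -> safe_lang A (val (b j)) (wdrop j w) ->
  forall i, j <= i -> has_safe A (val (b i)) (w i).
Proof.
move=> hb hj; suff hk k : safe_lang A (val (b (j + k))) (wdrop (j + k) w).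
  move=> i /subnKC <-; have := hk (i - j); rewrite wdropS => hsafe.
  by have [y hy _] := safe_lang_uncons hsafe; exists y.
elim: k => [|k IH]; first by rewrite addn0.
rewrite wdropS in IH; have [y hy hyv] := safe_lang_uncons IH.
have hs : has_safe A (val (b (j + k))) (w (j + k)) by exists y.
by rewrite addnS -(sdetA hy (trB_safe (hb _) hs)).
Qed.

Lemma B_lang_sup q w : lang A (val q) w -> lang B q w.
Proof.
move=> hw; have [f [f0 [ftr facc]]] := gfgA (val q).
pose t i := f (mkseq w i).
have ht i : tr A (t i) (w i) (t i.+1) by rewrite /t mkseqS; exact: ftr.
have [N hN] := facc w hw.
have hq : lang_equiv A (val q) (t 0) by rewrite /t f0.
have step i (b : QB FS) : lang_equiv A (val b) (t i) -> exists b',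
    (trB A b (w i) b' /\ (~ has_safe A (val b) (w i) -> precsim A (t i.+1) (val b'))) /\
    lang_equiv A (val b') (t i.+1).
  by move=> hbt; have [b' [? ? ?]] := B_shadow_step hbt (ht i); exists b'.
have [b [b0 hb]] := dependent_choice hq step.
exists b; split; first by split=> // i; exact: (hb i).2.1.
suff [M hM] : exists M, forall i, M <= i -> has_safe A (val (b i)) (w i).
  by exists M => i hi [hns _]; exact: hns (hM i hi).
have [[k [hk hns]] | allsafe] := pselect (exists k, N <= k /\ ~ has_safe A (val (b k)) (w k)).
  exists k.+1; apply: B_run_safe_from (fun i => (hb i).2.1) _.
  exact: ((hb k).2.2 hns).2 _ (run_safe_lang_drop ht hN (leqW hk)).
exists N => i hi; apply: contrapT => hns; apply: allsafe; by exists i.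
Qed.

Lemma B_lang q w : lang B q w <-> lang A (val q) w.
Proof. by split; [exact: B_lang_sub | exact: B_lang_sup]. Qed.

Lemma B_alpha_homogenous : alpha_homogenous B.
Proof.
move=> q a; have [hs | hns] := pselect (has_safe A (val q) a).
  by left=> -[s [_ [hns _]]]; exact: hns hs.
by right=> -[s /B_safe_trE hs]; apply: hns; exists (val s).
Qed.

Lemma B_safe_det : safe_det B.
Proof. by move=> q a s s' /B_safe_trE hs /B_safe_trE hs'; apply: val_inj; exact: sdetA hs hs'. Qed.

Lemma B_safe_live q a s : safe_tr B q a s -> exists v, safe_lang B s v.
Proof. by move=> /B_safe_trE /(safe_tr_live normalA) [v hv]; exists v; apply/B_safe_lang. Qed.

Lemma B_alpha_maximal : alpha_maximal_up_to_homogeneity B.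
Proof.
split; first exact: B_alpha_homogenous.
move=> q a noSafe s [s' [eqs ht]].
have hns : ~ has_safe A (val q) a by move/B_has_safe.
case: ht => [[hs _] // | [_ [q'' [hal he]]]]; right; split=> //; exists q''; split=> // v.
by rewrite -(he v) -!B_lang eqs.
Qed.

End FrontierAutomaton.

Theorem mainTheorem5 (Sigma Q : finType) (A : tNCW Sigma Q)
  (FS : {set {set Q}}) (q0 : QB FS) :
  wf_tNCW A -> nice A -> GFG A -> frontier A FS -> admissible_init A FS q0 ->
  alpha_maximal_up_to_homogeneity (C_aut (B_aut A FS q0)).
Proof.
move=> [succA _] [_ [gfgA [normalA [sdetA semdetA]]]] _ frA _.
apply: C_alpha_maximal.
- exact: B_alpha_homogenous.
- exact: B_safe_det.
- exact: B_safe_live normalA frA.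
- exact: B_alpha_maximal semdetA normalA sdetA frA succA gfgA.
Qed.
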